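(* Let $p\in(0,1)$, $q=1-p$, $\alpha\in(0,1)$. Let $\{N(t)\}_{t\in\mathbb{N}_0}$ be the Bernoulli counting process with parameter $p$, i.e. $N(t)=\max\{n\in\mathbb{N}_0:M_0+\dots+M_{n-1}\le t\}$ with $M_0,M_1,\dots$ i.i.d., $P(M_i=k)=pq^{k-1}$, $k\in\mathbb{N}$. Let $\{L_\alpha(t)\}_{t\in\mathbb{N}_0}$ be an independent Sibuya counting process: $L_\alpha(t)=\max\{n\in\mathbb{N}_0:Z_1+\dots+Z_n\le t\}$ with $Z_j$ i.i.d., $P(Z_j=k)=(-1)^{k-1}\binom{\alpha}{k}$, $k\in\mathbb{N}$. Let $\{N_A(t)\}_{t\in\mathbb{N}_0}$ be the fractional Bernoulli counting process of type A: $N_A(t)=\max\{n\in\mathbb{N}_0:J^A_0+\dots+J^A_{n-1}\le t\}$, where $J^A_0,J^A_1,\dots$ are i.i.d. with the discrete Mittag--Leffler distribution of type A, i.e. $J^A\overset{d}{=}\sum_{k=1}^MZ_k$ with $M$ geometric, $P(M=k)=pq^{k-1}$, independent of the i.i.d. Sibuya$(\alpha)$ variables $Z_k$; equivalently $\mathbb{E}u^{J^A}=\dfrac{1-(1-u)^\alpha}{1+\frac{q}{p}(1-u)^\alpha}$. Then for each $t\in\mathbb{N}_0$, $N_A(t)\overset{d}{=}N(L_\alpha(t))$.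
   Context: $\mathbb{N}_0=\mathbb{N}\cup\{0\}$; $\binom{\alpha}{k}=\alpha(\alpha-1)\cdots(\alpha-k+1)/k!$; empty sums are $0$. *)

(* R : realType. Discrete laws on nat are represented by their
   probability mass functions nat -> R. *)
From mathcomp Require Import all_boot all_order all_algebra.
From mathcomp Require Import reals.
Set Implicit Arguments. Unset Strict Implicit. Unset Printing Implicit Defensive.
Import Order.TTheory GRing.Theory Num.Theory.
Local Open Scope ring_scope.

Section Defs.
Variable R : realType.

Definition gbinom (a : R) (k : nat) : R :=
  (\prod_(i < k) (a - i%:R)) / (k`!)%:R.

Definition geom_pmf (p : R) (k : nat) : R :=
  if k is k'.+1 then p * (1 - p) ^+ k' else 0.

Definition sibuya_pmf (a : R) (k : nat) : R :=
  if k is k'.+1 then (-1) ^+ k' * gbinom a k else 0.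

Definition conv (f g : nat -> R) (k : nat) : R :=
  \sum_(i < k.+1) f i * g (k - i)%N.

Definition dirac0 (k : nat) : R := if k == 0%N then 1 else 0.

Definition convpow (f : nat -> R) (n : nat) : nat -> R := iter n (conv f) dirac0.

(* law of sum_{i=1}^M X_i, M with pmf g independent of i.i.d. X_i with pmf f,
   where f 0 = 0 (so only m <= k contribute to the mass at k) *)
Definition compound (g f : nat -> R) (k : nat) : R :=
  \sum_(m < k.+1) g m * convpow f m k.

(* law of the counting process N(t) = max{n : X_0+...+X_(n-1) <= t} with
   i.i.d. interarrival times of pmf f (supported on N = {1,2,...}):
   P(N(t) = n) = P(S_n <= t < S_n + X_n)
               = sum_(k <= t) P(S_n = k) * P(X_n > t - k). *)
Definition counting_pmf (f : nat -> R) (t n : nat) : R :=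
  \sum_(k < t.+1) convpow f n k * (1 - \sum_(j < (t - k).+1) f j).

Definition mlA_pmf (p a : R) : nat -> R := compound (geom_pmf p) (sibuya_pmf a).

(* law of N(L(t)) with N, L independent: sum_l P(L(t)=l) P(N(l)=n);
   L(t) <= t since Sibuya variables are >= 1, so l ranges over 0..t *)
Definition subordinated_pmf (fN fL : nat -> R) (t n : nat) : R :=
  \sum_(l < t.+1) counting_pmf fL t l * counting_pmf fN l n.

End Defs.

From mathcomp Require Import all_boot all_order all_algebra.
From mathcomp Require Import reals.
From mathcomp Require Import zify ring.
Set Implicit Arguments. Unset Strict Implicit. Unset Printing Implicit Defensive.
Import Order.TTheory GRing.Theory Num.Theory.
Local Open Scope ring_scope.

(** Truncate all generating functions at degree [t].  If [A] generates the
  interarrival law, then [P(N(t) = n) = [x^t] A^n (1 - A) / (1 - x)], and a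
  geometric compound of Sibuya variables is generated by [G(F(x))], as
  [F(0) = 0].  With [D = G^n (1 - G)] and [c_l = [x^t] F^l / (1 - x)]
  (that is, [P(Z_1 + ... + Z_l <= t)]), the law of [N_A(t)] at [n] is
  [sum_l D_l c_l], while [P(L(t) = l) = c_l - c_(l+1)] and
  [P(N(l) = n) = D_0 + ... + D_l].  Summation by parts and [c_(t+1) = 0]
  identify the two expressions. *)

Lemma big_ord_trunc (V : nmodType) (n m : nat) (F : nat -> V) : (n <= m)%N ->
  (forall i, (n <= i < m)%N -> F i = 0) ->
  \sum_(i < m) F i = \sum_(i < n) F i.
Proof.
move=> le_nm F_eq0; rewrite [RHS](big_ord_widen _ _ le_nm) [RHS]big_mkcond.
by apply: eq_bigr => i _; case: ltnP => // le_ni; rewrite F_eq0 // le_ni /=.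
Qed.

Section TruncatedSeries.
Variable R : comNzRingType.
Implicit Types (F P Q U : {poly R}) (c d : nat -> R).

Lemma summation_by_parts c d (T : nat) :
  \sum_(l < T) (c l - c l.+1) * \sum_(j < l.+1) d j =
  \sum_(l < T) c l * d l - c T * \sum_(j < T) d j.
Proof.
elim: T => [|T IH]; first by rewrite !big_ord0 mulr0 subr0.
by rewrite !big_ord_recr /= IH; ring.
Qed.

Lemma coef_exprM_lt F Q i k : F`_0 = 0 -> (k < i)%N -> (F ^+ i * Q)`_k = 0.
Proof.
move=> F0; elim: i k => [|i IH] k // lt_ki.
rewrite exprS -mulrA coefM big1 // => -[[|j] lt_jk] _ /=; first by rewrite F0 mul0r.
by rewrite IH ?mulr0 //; lia.
Qed.

Lemma coef_comp_polyM P F Q k : F`_0 = 0 ->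
  ((P \Po F) * Q)`_k = \sum_(i < k.+1) P`_i * (F ^+ i * Q)`_k.
Proof.
move=> F0; rewrite comp_polyE mulr_suml coef_sum.
under eq_bigr do rewrite -scalerAl coefZ.
pose a i := P`_i * (F ^+ i * Q)`_k.
transitivity (\sum_(i < size P + k.+1) a i).
  symmetry; apply: big_ord_trunc => [|i /andP[le_Pi _]]; first exact: leq_addr.
  by rewrite /a nth_default ?mul0r.
apply: big_ord_trunc => [|i /andP[lt_ki _]]; first exact: leq_addl.
by rewrite /a coef_exprM_lt ?mulr0.
Qed.

Lemma coefM_partial_sum P U l : (forall i, (i <= l)%N -> U`_i = 1) ->
  (P * U)`_l = \sum_(j < l.+1) P`_j.
Proof.
move=> U1; rewrite coefM; apply: eq_bigr => -[j lt_jl] _ /=.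
by rewrite U1 ?mulr1 ?leq_subr.
Qed.

End TruncatedSeries.

Section CountingSeries.
Variable R : realType.
Implicit Types (a f g : nat -> R) (A F G U : {poly R}).

Lemma coef_convpow a A t : (forall i, (i <= t)%N -> A`_i = a i) ->
  forall n k, (k <= t)%N -> convpow a n k = (A ^+ n)`_k.
Proof.
move=> Aa; elim=> [|n IH] k le_kt.
  by rewrite /convpow /= expr0 coef1 /dirac0; case: (k == 0%N).
rewrite /convpow iterS -/(convpow a n) /conv exprS coefM.
apply: eq_bigr => -[i lt_ik] _ /=.
by rewrite Aa ?IH //; lia.
Qed.

Lemma counting_pmfE a A U t n :
  (forall i, (i <= t)%N -> A`_i = a i) -> (forall i, (i <= t)%N -> U`_i = 1) ->
  counting_pmf a t n = (A ^+ n * (1 - A) * U)`_t.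
Proof.
move=> Aa U1; rewrite -mulrA coefM; apply: eq_bigr => -[k lt_kt] _ /=.
rewrite (coef_convpow Aa) //; congr (_ * _).
rewrite mulrBl mul1r coefB U1 ?leq_subr // coefM_partial_sum => [|i le_i].
  by congr (_ - _); apply: eq_bigr => -[j lt_j] _ /=; rewrite Aa //; lia.
by rewrite U1 //; lia.
Qed.

Lemma coef_compound g f G F t :
  (forall i, (i <= t)%N -> G`_i = g i) -> (forall i, (i <= t)%N -> F`_i = f i) ->
  F`_0 = 0 -> forall k, (k <= t)%N -> compound g f k = (G \Po F)`_k.
Proof.
move=> Gg Ff F0 k le_kt; rewrite -[G \Po F]mulr1 coef_comp_polyM //.
apply: eq_bigr => -[m lt_mk] _ /=.
by rewrite mulr1 Gg ?(coef_convpow Ff) //; lia.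
Qed.

Theorem counting_compound g f t n : f 0%N = 0 ->
  counting_pmf (compound g f) t n = subordinated_pmf g f t n.
Proof.
move=> f0.
pose F := \poly_(i < t.+1) f i; pose G := \poly_(i < t.+1) g i.
pose U : {poly R} := \poly_(i < t.+1) 1.
have Ff i : (i <= t)%N -> F`_i = f i by move=> le_it; rewrite coef_poly ltnS le_it.
have Gg i : (i <= t)%N -> G`_i = g i by move=> le_it; rewrite coef_poly ltnS le_it.
have U1 i : (i <= t)%N -> U`_i = 1 by move=> le_it; rewrite coef_poly ltnS le_it.
have F0 : F`_0 = 0 by rewrite Ff.
pose D := G ^+ n * (1 - G).
pose c l := (F ^+ l * U)`_t.
have lhsE : counting_pmf (compound g f) t n = \sum_(i < t.+1) D`_i * c i.
  rewrite (counting_pmfE (A := G \Po F) n _ U1) => [|i le_it]; last first.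
    by rewrite (coef_compound Gg Ff).
  by rewrite -coef_comp_polyM // /D rmorphM rmorphXn rmorphB rmorph1.
have rhs_term (l : 'I_t.+1) :
    counting_pmf f t l * counting_pmf g l n = (c l - c l.+1) * \sum_(j < l.+1) D`_j.
  have lt_l : (l < t.+1)%N := ltn_ord l.
  have U1l i : (i <= l)%N -> U`_i = 1 by move=> le_il; apply: U1; lia.
  have Ggl i : (i <= l)%N -> G`_i = g i by move=> le_il; apply: Gg; lia.
  rewrite (counting_pmfE l Ff U1) (counting_pmfE n Ggl U1l) (coefM_partial_sum _ U1l).
  by rewrite mulrBr mulr1 mulrBl coefB -exprSr.
rewrite lhsE /subordinated_pmf (eq_bigr _ (fun l _ => rhs_term l)).
have c_eq0 : c t.+1 = 0 by exact: coef_exprM_lt.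
rewrite summation_by_parts c_eq0 mul0r subr0.
by apply: eq_bigr => l _; rewrite mulrC.
Qed.

End CountingSeries.

Theorem mainTheorem7 (R : realType) (p alpha : R)
  (hp0 : 0 < p) (hp1 : p < 1) (ha0 : 0 < alpha) (ha1 : alpha < 1) :
  forall t n : nat,
    counting_pmf (mlA_pmf p alpha) t n =
    subordinated_pmf (geom_pmf p) (sibuya_pmf alpha) t n.
Proof.
by move=> t n; apply: counting_compound.
Qed.
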